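(* For every $\xi\in(0,1)$ there exists $C(\xi)$ such that if $p\ge C(\log n/n)^{1/2}$, then a.a.s. for every $x\in[1,\xi n/2]$, $G(n,p)$ does not contain a set $W$ of $x$ vertices together with a set $E$ of $x$ pairwise disjoint edges none of which has an endpoint in $W$, such that either the endpoints of each edge in $E$ have at least $\xi np^2$ common neighbours in $W$, or each vertex in $W$ is adjacent to both endpoints of at least $\xi np^2$ edges of $E$.
   Context: $G(n,p)$ is the binomial random graph on $n$ vertices; a.a.s. means with probability tending to $1$ as $n\to\infty$; $\log$ is the natural logarithm. *)

From HB Require Import structures.
From mathcomp Require Import all_boot all_order all_algebra.
From mathcomp Require Import all_classical all_reals all_analysis.
Set Implicit Arguments. Unset Strict Implicit. Unset Printing Implicit Defensive.
Import Order.TTheory GRing.Theory Num.Theory.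
Local Open Scope ring_scope.

Definition pairs (n : nat) : {set {set 'I_n}} := [set e : {set 'I_n} | #|e| == 2%N].

(* A simple graph on 'I_n is its edge set G, with G \subset pairs n. *)
Definition adj (n : nat) (G : {set {set 'I_n}}) (u v : 'I_n) : bool :=
  [set u; v] \in G.

(* Probability of the event A under the binomial random graph G(n,p):
   each of the #|pairs n| possible edges present independently with prob. p. *)
Definition Gnp_prob (R : realType) (n : nat) (p : R)
    (A : {set {set 'I_n}} -> bool) : R :=
  \sum_(G : {set {set 'I_n}} | (G \subset pairs n) && A G)
     p ^+ #|G| * (1 - p) ^+ (#|pairs n| - #|G|).

Definition adj_both (n : nat) (G : {set {set 'I_n}}) (w : 'I_n) (e : {set 'I_n}) : bool :=
  [forall v in e, adj G w v].

Definition bad_config (R : realType) (n : nat) (p xi : R) (G : {set {set 'I_n}})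
    (x : nat) : Prop :=
  exists (W : {set 'I_n}) (E : {set {set 'I_n}}),
    [/\ #|W| = x /\ #|E| = x, E \subset G, finset.trivIset E,
        (forall e, e \in E -> [disjoint e & W]) &
        ((forall e, e \in E ->
            xi * n%:R * p ^+ 2 <= #|[set w in W | adj_both G w e]|%:R)
         \/
         (forall w, w \in W ->
            xi * n%:R * p ^+ 2 <= #|[set e in E | adj_both G w e]|%:R))].

Definition good_event (R : realType) (n : nat) (p xi : R) (G : {set {set 'I_n}}) : bool :=
  `[< forall x : nat, (1 <= x)%N -> (x%:R <= xi * n%:R / 2 :> R) ->
        ~ bad_config p xi G x >].

From mathcomp Require Import all_boot all_order all_algebra.
From mathcomp Require Import all_classical all_reals all_analysis.
From mathcomp Require Import ring lra zify.
Import Order.TTheory GRing.Theory Num.Theory numFieldNormedType.Exports.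
Set Implicit Arguments. Unset Strict Implicit. Unset Printing Implicit Defensive.
Local Open Scope ring_scope.

(* Fix [W] and a matching [E] with [#|W| = #|E| = x] and count the triangles
   [(w, e)], [w \in W], [e \in E], [w] adjacent to both ends of [e]. Either
   alternative of the configuration forces at least [x xi n p^2] triangles. Distinct
   triangles use disjoint pairs of edges, so [E (1 + c)^T = (1 + c p^2)^(x^2)], and
   Markov's inequality with [c = 1/2] bounds the probability of [x xi n p^2]
   triangles by [exp (- x xi n p^2 / 12)], since [x <= xi n / 2]. There are at most
   [n^(3x)] choices of [(W, E)] and [xi n p^2 >= 60 log n] once [C = 1 + 60 / xi],
   so the union bound over [x < n] leaves a failure probability of at most [1 / n]. *)

Lemma exprD_subsets (R : comPzSemiRingType) (T : finType) (A : {set T}) (a b : R) :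
  (a + b) ^+ #|A| = \sum_(S : {set T} | S \subset A) a ^+ #|S| * b ^+ (#|A| - #|S|).
Proof.
rewrite addrC exprDn (partition_big (fun S : {set T} => inord #|S| : 'I_#|A|.+1) xpredT) //=.
apply: eq_bigr => i _; rewrite mulrC -cards_draws -sumr_const; symmetry.
apply: eq_big => [S | S]; rewrite ?inE.
  case sSA: (S \subset A) => //=; have := subset_leq_card sSA; rewrite -ltnS => ltSA.
  by apply/eqP/eqP => [<- | eqSi]; [rewrite inordK | apply: val_inj; rewrite /= inordK].
by case/andP=> sSA /eqP <-; rewrite inordK // ltnS subset_leq_card.
Qed.

Lemma sum_indicator (R : pzSemiRingType) (I : finType) (P Q : pred I) :
  \sum_(i | P i) (Q i)%:R = #|[pred i | P i && Q i]|%:R :> R.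
Proof. by rewrite -sum1_card natr_sum big_mkcondr; apply: eq_bigr => i _; case: (Q i). Qed.

Lemma ler_sum_term (R : numDomainType) (I : finType) (P : pred I) (F : I -> R) i :
  (forall j, P j -> 0 <= F j) -> P i -> F i <= \sum_(j | P j) F j.
Proof.
move=> F_ge0 Pi; rewrite (bigD1 i) //= lerDl sumr_ge0 // => j /andP[Pj _].
exact: F_ge0.
Qed.

Section GnpExpectation.
Variables (R : realType) (n : nat) (p : R).
Local Notation graph := {set {set 'I_n}}.

Definition gnp_weight (G : graph) : R := p ^+ #|G| * (1 - p) ^+ (#|pairs n| - #|G|).

Definition gnp_E (f : graph -> R) : R :=
  \sum_(G : graph | G \subset pairs n) gnp_weight G * f G.

Lemma Gnp_probE (A : graph -> bool) : Gnp_prob p A = gnp_E (fun G => (A G)%:R).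
Proof.
by rewrite /Gnp_prob big_mkcondr; apply: eq_bigr => G _; case: (A G); rewrite ?mulr1 ?mulr0.
Qed.

Lemma eq_gnp_E (f g : graph -> R) : f =1 g -> gnp_E f = gnp_E g.
Proof. by move=> fg; apply: eq_bigr => G _; rewrite fg. Qed.

Lemma gnp_ED (f g : graph -> R) : gnp_E (fun G => f G + g G) = gnp_E f + gnp_E g.
Proof. by rewrite -big_split; apply: eq_bigr => G _; rewrite mulrDr. Qed.

Lemma gnp_EZ (c : R) (f : graph -> R) : gnp_E (fun G => c * f G) = c * gnp_E f.
Proof. by rewrite mulr_sumr; apply: eq_bigr => G _; rewrite mulrCA. Qed.

Lemma gnp_E_sum (I : finType) (P : pred I) (F : I -> graph -> R) :
  gnp_E (fun G => \sum_(i | P i) F i G) = \sum_(i | P i) gnp_E (F i).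
Proof. by rewrite exchange_big; apply: eq_bigr => G _; rewrite mulr_sumr. Qed.

(* Conditioning on [F \subset G] leaves the other possible edges free, and their
   weights sum to [(p + (1 - p)) ^+ _ = 1]. *)
Lemma gnp_E_subset (F : graph) : F \subset pairs n ->
  gnp_E (fun G => (F \subset G)%:R) = p ^+ #|F|.
Proof.
move=> sFP; rewrite /gnp_E.
rewrite (eq_bigr (fun G : graph => if F \subset G then gnp_weight G else 0)); last first.
  by move=> G _; case: (F \subset G); rewrite ?mulr1 ?mulr0.
rewrite -big_mkcondr /=.
rewrite (reindex_onto (fun H => F :|: H) (fun G => G :\: F)) /=; last first.
  move=> G /andP[_ sFG]; apply/setP => e; rewrite !inE.
  by case: (boolP (e \in F)) => // /(fintype.subsetP sFG).
rewrite (eq_bigl (fun H : graph => H \subset pairs n :\: F)); last first.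
  move=> H; rewrite finset.subUset sFP finset.subsetUl finset.subsetD finset.setDUl.
  rewrite finset.setDv finset.set0U andbT /=; congr (_ && _).
  exact/eqP/finset.setDidPl.
transitivity (\sum_(H : graph | H \subset pairs n :\: F)
    p ^+ #|F| * (p ^+ #|H| * (1 - p) ^+ (#|pairs n :\: F| - #|H|))).
  apply: eq_bigr => H; rewrite finset.subsetD => /andP[_ dHF].
  rewrite /gnp_weight finset.cardsU finset.setIC (finset.disjoint_setI0 dHF).
  by rewrite finset.cards0 subn0 (finset.cardsDS sFP) subnDA exprD mulrA.
by rewrite -mulr_sumr -exprD_subsets subrKC expr1n mulr1.
Qed.

Lemma Gnp_probC (A : graph -> bool) :
  Gnp_prob p A + Gnp_prob p (fun G => ~~ A G) = 1.
Proof.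
rewrite !Gnp_probE -gnp_ED (@eq_gnp_E _ (fun G => ((finset.set0 : graph) \subset G)%:R)).
  by rewrite gnp_E_subset ?finset.sub0set // finset.cards0.
by move=> G; rewrite finset.sub0set; case: (A G); rewrite ?addr0 ?add0r.
Qed.

Hypotheses (p_ge0 : 0 <= p) (p_le1 : p <= 1).

Lemma gnp_weight_ge0 (G : graph) : 0 <= gnp_weight G.
Proof. by rewrite mulr_ge0 // exprn_ge0 // subr_ge0. Qed.

Lemma ler_gnp_E (f g : graph -> R) :
  (forall G : graph, G \subset pairs n -> f G <= g G) -> gnp_E f <= gnp_E g.
Proof.
by move=> fg; apply: ler_sum => G sGP; apply: ler_wpM2l (fg G sGP); apply: gnp_weight_ge0.
Qed.

Lemma Gnp_prob_ge0 (A : graph -> bool) : 0 <= Gnp_prob p A.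
Proof. by apply: sumr_ge0 => G _; apply: gnp_weight_ge0. Qed.

End GnpExpectation.

Lemma expR_third_le (R : realType) : expR (1 / 3 : R) <= 3 / 2.
Proof.
have expRKN : expR (1 / 3 : R) * expR (- (1 / 3)) = 1 by rewrite -expRD subrr expR0.
have := ler_wpM2l (expR_ge0 (1 / 3 : R)) (expR_ge1Dx (- (1 / 3))).
rewrite expRKN; lra.
Qed.

Lemma ler_indicator_expR (R : realType) (m : R) (k : nat) :
  ((m <= k%:R)%R : bool)%:R <= expR (- (m / 3)) * (1 + 1 / 2) ^+ k.
Proof.
have [mk | _] := boolP (m <= k%:R); last by rewrite mulr_ge0 ?expR_ge0 ?exprn_ge0.
have expR_k : expR (k%:R * (1 / 3)) <= (1 + 1 / 2) ^+ k :> R.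
  rewrite expRM_natl; apply: lerXn2r; rewrite ?nnegrE ?expR_ge0 //; try lra.
  by apply: le_trans (expR_third_le R) _; lra.
apply: le_trans (ler_wpM2l (expR_ge0 _) expR_k); rewrite -expRD.
by apply: le_trans (expR_ge1Dx _); rewrite /= lerDl; lra.
Qed.

Section Triangles.
Variables (n : nat) (W : {set 'I_n}) (E : {set {set 'I_n}}).
Hypotheses (sEP : E \subset pairs n) (tE : finset.trivIset E)
  (dEW : forall e, e \in E -> [disjoint e & W]).
Local Notation graph := {set {set 'I_n}}.
Local Notation star := ('I_n * {set 'I_n})%type.

Definition triangles (G : graph) : {set star} :=
  [set k in finset.setX W E | adj_both G k.1 k.2].

Definition incidences (S : {set star}) : {set star * 'I_n} :=
  [set kv | (kv.1 \in S) && (kv.2 \in kv.1.2)].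

Definition spoke (kv : star * 'I_n) : {set 'I_n} := [set kv.1.1; kv.2].

Definition spokes (S : {set star}) : graph := spoke @: incidences S.

Lemma triangles_sub (G : graph) : triangles G \subset finset.setX W E.
Proof. by apply/fintype.subsetP => k; rewrite inE => /andP[]. Qed.

Lemma card_star_edge (k : star) : k \in finset.setX W E -> #|k.2| = 2%N.
Proof.
case: k => w e; rewrite finset.in_setX /= => /andP[_ eE].
by have := fintype.subsetP sEP _ eE; rewrite inE => /eqP.
Qed.

Lemma star_apex_notin (k : star) v : k \in finset.setX W E -> v \in k.2 -> k.1 != v.
Proof.
case: k => w e; rewrite finset.in_setX /= => /andP[wW eE] ve.
by apply: contraTneq wW => ->; rewrite (disjointFr (dEW eE) ve).
Qed.

Lemma spokes_sub_graph (S : {set star}) (G : graph) : S \subset finset.setX W E ->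
  (spokes S \subset G) = (S \subset triangles G).
Proof.
move=> sSK; apply/idP/idP => [sSG | sST].
  apply/fintype.subsetP => k kS; rewrite inE (fintype.subsetP sSK _ kS) /=.
  apply/forallP => v; apply/implyP => vk; apply: (fintype.subsetP sSG).
  by apply/finset.imsetP; exists (k, v); rewrite // inE kS.
apply/fintype.subsetP => f /finset.imsetP[kv]; rewrite inE => /andP[kS vk] ->.
by have := fintype.subsetP sST _ kS; rewrite inE => /andP[_ /forallP/(_ kv.2)]; rewrite vk.
Qed.

Lemma spokes_sub_pairs (S : {set star}) : S \subset finset.setX W E -> spokes S \subset pairs n.
Proof.
move=> sSK; apply/fintype.subsetP => f /finset.imsetP[kv]; rewrite inE => /andP[kS vk] ->.
by rewrite inE finset.cards2 (star_apex_notin (fintype.subsetP sSK _ kS) vk).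
Qed.

Lemma card_incidences (S : {set star}) :
  S \subset finset.setX W E -> #|incidences S| = (2 * #|S|)%N.
Proof.
move=> sSK; rewrite -sum1dep_card.
rewrite -(pair_big_dep (mem S) (fun k v => v \in k.2) (fun _ _ => 1%N)) /=.
rewrite (eq_bigr (fun _ => 2%N)) => [|k kS]; first by rewrite sum_nat_const mulnC.
rewrite sum1dep_card -(card_star_edge (fintype.subsetP sSK _ kS)).
by apply: eq_card => v; rewrite inE.
Qed.

(* The apex of a spoke is the endpoint in [W]; the other endpoint determines the
   edge of the matching [E]. *)
Lemma spoke_inj (S : {set star}) :
  S \subset finset.setX W E -> {in incidences S &, injective spoke}.
Proof.
move=> sSK [[w e] v] [[w' e'] v']; rewrite !inE /= => /andP[kS ve] /andP[kS' ve'] eq_spoke.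
rewrite /spoke /= in eq_spoke.
have := fintype.subsetP sSK _ kS; have := fintype.subsetP sSK _ kS'.
rewrite !finset.in_setX /= => /andP[w'W e'E] /andP[wW eE].
have notinW u f : f \in E -> u \in f -> u \notin W by move=> fE /(disjointFr (dEW fE)) ->.
have eq_w : w = w'.
  have : w \in [set w'; v'] by rewrite -eq_spoke finset.set21.
  rewrite finset.in_set2 => /orP[/eqP // | /eqP wv'].
  by move: (notinW _ _ e'E ve'); rewrite -wv' wW.
subst w'; have eq_v : v = v'.
  have : v \in [set w; v'] by rewrite -eq_spoke finset.set22.
  by rewrite finset.in_set2 => /orP[/eqP vw | /eqP //]; move: (notinW _ _ eE ve); rewrite vw wW.
subst v'; congr (_, _, _); apply/eqP; apply: contraT => /(finset.trivIsetP tE _ _ eE e'E).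
by move/disjointFr/(_ ve); rewrite ve'.
Qed.

Lemma card_spokes (S : {set star}) : S \subset finset.setX W E -> #|spokes S| = (2 * #|S|)%N.
Proof. by move=> sSK; rewrite (card_in_imset (spoke_inj sSK)) card_incidences. Qed.

Variables (R : realType) (p : R).
Hypotheses (p_ge0 : 0 <= p) (p_le1 : p <= 1).

(* Expanding [(1 + c) ^+ #|T|] over the subsets [S] of [T = triangles G], each
   subset is present iff its [2 #|S|] spokes are edges; distinct stars have
   disjoint spokes, so they behave independently. *)
Lemma gnp_E_expr_card_triangles (c : R) :
  gnp_E p (fun G => (1 + c) ^+ #|triangles G|) = (1 + c * p ^+ 2) ^+ #|finset.setX W E|.
Proof.
transitivity (gnp_E p (fun G => \sum_(S : {set star} | S \subset finset.setX W E)
                  c ^+ #|S| * (spokes S \subset G)%:R)).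
  apply: eq_gnp_E => G; rewrite addrC exprD_subsets.
  transitivity (\sum_(S : {set star} | S \subset finset.setX W E)
                  if S \subset triangles G then c ^+ #|S| else 0); last first.
    apply: eq_bigr => S sSK; rewrite spokes_sub_graph //.
    by case: ifP; rewrite ?mulr1 ?mulr0.
  rewrite -big_mkcondr; apply: eq_big => [S | S _]; last by rewrite expr1n mulr1.
  apply/idP/andP => [sST | [] //]; split=> //.
  exact: fintype.subset_trans sST (triangles_sub G).
rewrite gnp_E_sum (addrC 1) exprD_subsets; apply: eq_bigr => S sSK.
by rewrite gnp_EZ gnp_E_subset ?spokes_sub_pairs // card_spokes // expr1n mulr1 exprMn exprM.
Qed.

Lemma gnp_tail_card_triangles (m : R) :
  gnp_E p (fun G => ((m <= #|triangles G|%:R)%R : bool)%:R)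
    <= expR (- (m / 3) + #|finset.setX W E|%:R * p ^+ 2 / 2).
Proof.
apply: le_trans (ler_gnp_E p_ge0 p_le1 (fun G _ => ler_indicator_expR m _)) _.
rewrite gnp_EZ gnp_E_expr_card_triangles expRD ler_wpM2l ?expR_ge0 //.
rewrite -mulrA expRM_natl; apply: lerXn2r; rewrite ?nnegrE ?expR_ge0 //.
  by rewrite addr_ge0 // mulr_ge0 // sqr_ge0.
by rewrite mul1r mulrC; apply: expR_ge1Dx.
Qed.

End Triangles.

Section UnionBound.
Variables (R : realType) (n : nat) (p xi : R).
Local Notation graph := {set {set 'I_n}}.
Local Notation threshold := (xi * n%:R * p ^+ 2).

Lemma natr_card_sel (T : finType) (A : {set T}) (P : pred T) :
  #|[set w in A | P w]|%:R = \sum_(w in A) (P w)%:R :> R.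
Proof. by rewrite sum_indicator; congr _%:R; apply: eq_card => w; rewrite inE. Qed.

Lemma natr_card_triangles (W : {set 'I_n}) (E : graph) (G : graph) :
  #|triangles W E G|%:R = \sum_(w in W) \sum_(e in E) (adj_both G w e)%:R :> R.
Proof.
rewrite pair_big_dep /= sum_indicator; congr _%:R.
by apply: eq_card => -[w e]; rewrite !inE.
Qed.

Definition config_shape (x : nat) (W : {set 'I_n}) (E : graph) : bool :=
  [&& #|W| == x, E \subset pairs n, #|E| == x, finset.trivIset E &
      [forall e in E, [disjoint e & W]]].

Lemma bad_config_many_triangles (G : graph) (x : nat) :
  G \subset pairs n -> bad_config p xi G x ->
  exists W E, config_shape x W E && (x%:R * threshold <= #|triangles W E G|%:R).
Proof.
move=> sGP [W [E [[cardW cardE] sEG tE dEW deg]]].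
exists W, E; apply/andP; split.
  rewrite /config_shape cardW cardE !eqxx (fintype.subset_trans sEG sGP) tE /=.
  by apply/forall_inP.
rewrite natr_card_triangles; case: deg => deg.
- rewrite exchange_big /= -cardE -sum1_card natr_sum mulr_suml.
  by apply: ler_sum => e eE; rewrite mul1r -natr_card_sel; apply: deg.
- rewrite -cardW -sum1_card natr_sum mulr_suml.
  by apply: ler_sum => w wW; rewrite mul1r -natr_card_sel; apply: deg.
Qed.

Definition admissible (x : nat) : bool := (0 < x)%N && (x%:R <= xi * n%:R / 2).

Definition config_indicator (x : nat) (W : {set 'I_n}) (E G : graph) : R :=
  (config_shape x W E && (x%:R * threshold <= #|triangles W E G|%:R))%:R.

Lemma config_indicator_ge0 x W E G : 0 <= config_indicator x W E G.
Proof. exact: ler0n. Qed.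

Hypothesis xi_le1 : xi <= 1.

Lemma admissible_lt x : admissible x -> (x < n)%N.
Proof.
case/andP => x_gt0 x_le; rewrite -(ltr_nat R).
have : 1 <= x%:R :> R by rewrite ler1n.
have : xi * n%:R <= n%:R :> R by rewrite ler_piMl.
lra.
Qed.

Definition witness_count (G : graph) : R :=
  \sum_(x < n | admissible x) \sum_(W : {set 'I_n}) \sum_(E : graph) config_indicator x W E G.

Lemma witness_count_ge0 G : 0 <= witness_count G.
Proof.
apply: sumr_ge0 => x _; apply: sumr_ge0 => W _; apply: sumr_ge0 => E _.
exact: config_indicator_ge0.
Qed.

Lemma not_good_le_witness_count (G : graph) : G \subset pairs n ->
  (~~ good_event p xi G)%:R <= witness_count G.
Proof.
move=> sGP; have [_ | /asboolPn not_good] := boolP (good_event p xi G).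
  exact: witness_count_ge0.
have [x [x_gt0 x_le bad]] : exists x : nat,
    [/\ (1 <= x)%N, x%:R <= xi * n%:R / 2 & bad_config p xi G x].
  by apply: contrapT => no_x; apply: not_good => y y_gt0 y_le bad_y; apply: no_x; exists y.
have adm_x : admissible x by rewrite /admissible x_gt0.
have [W [E many]] := bad_config_many_triangles sGP bad.
have -> : (~~ false)%:R = config_indicator (Ordinal (admissible_lt adm_x)) W E G.
  by rewrite /config_indicator many.
set i := Ordinal _.
have ge0 := config_indicator_ge0.
apply: le_trans (ler_sum_term (P := xpredT) (F := fun E' => config_indicator i W E' G)
  (fun _ _ => ge0 _ _ _ _) isT) _.
apply: le_trans (ler_sum_term (P := xpredT)
    (F := fun W' => \sum_(E' : graph) config_indicator i W' E' G)
  (fun _ _ => sumr_ge0 _ (fun _ _ => ge0 _ _ _ _)) isT) _.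
rewrite /witness_count.
apply: (ler_sum_term (P := fun x' : 'I_n => admissible x')
  (F := fun x' => \sum_(W' : {set 'I_n}) \sum_(E' : graph) config_indicator x' W' E' G)
  (i := i) _ adm_x).
by move=> *; do 2!apply: sumr_ge0 => * /=; apply: ge0.
Qed.

End UnionBound.

Section FirstMoment.
Variables (R : realType) (n : nat) (p xi : R).
Hypotheses (p_ge0 : 0 <= p) (p_le1 : p <= 1).
Local Notation graph := {set {set 'I_n}}.
Local Notation threshold := (xi * n%:R * p ^+ 2).

(* The exponent [- x threshold / 3 + x^2 p^2 / 2] of the tail bound is at most
   [- x threshold / 12] since [x <= xi n / 2]. *)
Lemma gnp_E_config_indicator x (W : {set 'I_n}) (E : graph) : admissible n xi x ->
  gnp_E p (config_indicator p xi x W E)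
    <= (config_shape x W E)%:R * expR (- (x%:R * threshold) / 12).
Proof.
case/andP => _ x_le; rewrite /config_indicator.
under eq_gnp_E => G do rewrite -mulnb natrM.
rewrite gnp_EZ; have [shape | _] := boolP (config_shape x W E); last by rewrite !mul0r.
case/and5P: shape => /eqP cardW sEP /eqP cardE tE /forall_inP dEW; rewrite !mul1r.
apply: le_trans (gnp_tail_card_triangles sEP tE dEW p_ge0 p_le1 _) _.
rewrite ler_expR finset.cardsX cardW cardE natrM.
have x_ge0 : 0 <= x%:R :> R by [].
have p2_ge0 : 0 <= p ^+ 2 by apply: sqr_ge0.
have gap : 0 <= xi * n%:R / 2 - x%:R by rewrite subr_ge0.
have := mulr_ge0 (mulr_ge0 x_ge0 p2_ge0) gap.
nra.
Qed.

Lemma sum_config_shape_le x :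
  \sum_(W : {set 'I_n}) \sum_(E : graph) (config_shape x W E)%:R
    <= ('C(n, x) * 'C(#|pairs n|, x))%:R :> R.
Proof.
apply: le_trans (_ : _ <= \sum_(W : {set 'I_n}) \sum_(E : graph)
    (#|W| == x)%:R * ((E \subset pairs n) && (#|E| == x))%:R) _.
  apply: ler_sum => W _; apply: ler_sum => E _; rewrite -natrM ler_nat mulnb.
  rewrite /config_shape; case: (#|W| == x); case: (E \subset pairs n); case: (#|E| == x) => //=.
  exact: leq_b1.
under eq_bigr => W _ do rewrite -mulr_sumr.
rewrite -mulr_suml !sum_indicator natrM.
rewrite -[n in 'C(n, _)]card_ord -card_draws -cards_draws -!natrM ler_nat.
by rewrite leq_mul // subset_leq_card //; apply/fintype.subsetP => S; rewrite !inE.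
Qed.

End FirstMoment.

Lemma ffact_leq_exp m k : (m ^_ k <= m ^ k)%N.
Proof.
elim: k => [|k IHk]; first by rewrite ffactn0.
by rewrite ffactnSr expnSr leq_mul // leq_subr.
Qed.

Lemma bin_leq_exp m k : ('C(m, k) <= m ^ k)%N.
Proof. by apply: leq_trans (ffact_leq_exp m k); rewrite -bin_ffact leq_pmulr // fact_gt0. Qed.

Lemma card_config_shapes_leq n x : ('C(n, x) * 'C(#|pairs n|, x) <= n ^ (3 * x))%N.
Proof.
have card_pairs : (#|pairs n| <= n ^ 2)%N by rewrite card_draws card_ord bin_leq_exp.
have -> : (3 * x = x + 2 * x)%N by lia.
rewrite expnD expnM leq_mul ?bin_leq_exp //.
exact: leq_trans (leq_bin2l _ card_pairs) (bin_leq_exp _ _).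
Qed.

Lemma count_tail_product_le (R : realType) (n x : nat) (d : R) :
  (0 < n)%N -> (0 < x)%N -> 60 * ln n%:R <= d ->
  (n ^ (3 * x))%:R * expR (- (x%:R * d) / 12) <= (n%:R ^+ 2)^-1.
Proof.
move=> n_gt0 x_gt0 d_ge; have n_pos : 0 < n%:R :> R by rewrite ltr0n.
rewrite natrX -(lnK n_pos) -!expRM_natl -expRN -expRD ler_expR.
have ln_ge0 : 0 <= ln n%:R :> R by rewrite ln_ge0 // ler1n.
have x_ge1 : 1 <= x%:R :> R by rewrite ler1n.
have := ler_wpM2l (ler0n R x) d_ge.
have : 0 <= (x%:R - 1) * ln n%:R :> R by rewrite mulr_ge0 // subr_ge0.
rewrite natrM; nra.
Qed.

Lemma Gnp_prob_not_good_le (R : realType) (n : nat) (p xi : R) :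
  0 <= p -> p <= 1 -> xi <= 1 -> (0 < n)%N -> 60 * ln n%:R <= xi * n%:R * p ^+ 2 ->
  Gnp_prob p (fun G : {set {set 'I_n}} => ~~ good_event p xi G) <= n%:R^-1.
Proof.
move=> p_ge0 p_le1 xi_le1 n_gt0 dense.
rewrite Gnp_probE.
apply: le_trans (ler_gnp_E p_ge0 p_le1 (fun G sGP => not_good_le_witness_count p xi_le1 sGP)) _.
rewrite gnp_E_sum.
apply: le_trans (_ : _ <= \sum_(x < n | admissible n xi x) (n%:R ^+ 2)^-1) _.
  apply: ler_sum => x adm_x; rewrite gnp_E_sum; under eq_bigr => W _ do rewrite gnp_E_sum.
  apply: le_trans (_ : _ <= \sum_(W : {set 'I_n}) \sum_(E : {set {set 'I_n}})
      (config_shape x W E)%:R * expR (- (x%:R * (xi * n%:R * p ^+ 2)) / 12)) _.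
    by apply: ler_sum => W _; apply: ler_sum => E _; apply: gnp_E_config_indicator.
  under eq_bigr => W _ do rewrite -mulr_suml; rewrite -mulr_suml.
  apply: le_trans (ler_wpM2r (expR_ge0 _) (sum_config_shape_le R n x)) _.
  apply: le_trans (ler_wpM2r (expR_ge0 _) (_ : _ <= (n ^ (3 * x))%:R)) _.
    by rewrite ler_nat card_config_shapes_leq.
  by apply: count_tail_product_le => //; case/andP: adm_x.
apply: le_trans (_ : _ <= \sum_(x < n) (n%:R ^+ 2)^-1) _.
  rewrite [X in _ <= X](bigID (fun x : 'I_n => admissible n xi x)) lerDl.
  by rewrite sumr_ge0 // => *; rewrite invr_ge0.
have n_neq0 : n%:R != 0 :> R by rewrite pnatr_eq0 -lt0n.
by rewrite sumr_const card_ord -[_ *+ n]mulr_natr expr2 invfM -mulrA mulVf ?mulr1.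
Qed.

Lemma sqrt_ln_density_le (R : realType) (xi q : R) (n : nat) : 0 < xi -> (0 < n)%N ->
  (1 + 60 / xi) * Num.sqrt (ln n%:R / n%:R) <= q -> 60 * ln n%:R <= xi * n%:R * q ^+ 2.
Proof.
move=> xi_gt0 n_gt0 q_ge; set C := 1 + 60 / xi in q_ge.
have C_ge1 : 1 <= C by rewrite lerDl divr_ge0 // ltW.
have n_pos : 0 < n%:R :> R by rewrite ltr0n.
have ln_ge0 : 0 <= ln n%:R :> R by rewrite ln_ge0 // ler1n.
have ratio_ge0 : 0 <= ln n%:R / n%:R :> R by rewrite divr_ge0 // ltW.
have lhs_ge0 : 0 <= C * Num.sqrt (ln n%:R / n%:R).
  by rewrite mulr_ge0 ?sqrtr_ge0 // (le_trans _ C_ge1).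
have q2_ge : C ^+ 2 * (ln n%:R / n%:R) <= q ^+ 2.
  rewrite -(sqr_sqrtr ratio_ge0) -exprMn.
  by apply: lerXn2r; rewrite ?nnegrE // (le_trans lhs_ge0 q_ge).
have := ler_wpM2l (mulr_ge0 (ltW xi_gt0) (ltW n_pos)) q2_ge.
have -> : xi * n%:R * (C ^+ 2 * (ln n%:R / n%:R)) = xi * C * C * ln n%:R.
  by field; rewrite gt_eqF.
have -> : xi * C = xi + 60 by rewrite /C; field; rewrite gt_eqF.
have : 0 <= (C - 1) * ln n%:R by rewrite mulr_ge0 // subr_ge0.
have : 0 <= xi * C * ln n%:R by rewrite !mulr_ge0 // ?(ltW xi_gt0) ?(le_trans _ C_ge1).
nra.
Qed.

Lemma invn_le_harmonic (R : realType) (n : nat) : (0 < n)%N -> n%:R^-1 <= 2 * harmonic n :> R.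
Proof.
move=> n_gt0; rewrite /= ler_pdivlMr ?ltr0n // mulrC ler_pdivrMr ?ltr0n //.
by rewrite -natrM ler_nat; lia.
Qed.

Local Open Scope classical_set_scope.
Local Open Scope ring_scope.

Theorem proposition4p3 (R : realType) (xi : R) (hxi0 : 0 < xi) (hxi1 : xi < 1) :
  exists C : R, 0 < C /\
    forall p : nat -> R,
      (forall n, 0 <= p n <= 1) ->
      (\forall n \near \oo, C * Num.sqrt (ln n%:R / n%:R) <= p n) ->
      Gnp_prob (p n) (@good_event R n (p n) xi) @[n --> \oo] --> (1 : R).
Proof.
exists (1 + 60 / xi); split; first by rewrite addr_gt0 ?divr_gt0.
move=> p p01 p_ge.
have harmonic2_cvg : (1 - 2 * harmonic n : R) @[n --> \oo] --> (1 : R).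
  rewrite -[X in _ --> X]subr0 -(mulr0 2); apply: cvgB; first exact: cvg_cst.
  by apply: cvgM; [exact: cvg_cst | exact: cvg_harmonic].
apply: (squeeze_cvgr _ harmonic2_cvg (cvg_cst _)); near=> n.
have n_gt0 : (0 < n)%N by near: n; exists 1%N.
have /andP[p_ge0 p_le1] := p01 n.
have dense : 60 * ln n%:R <= xi * n%:R * p n ^+ 2.
  by apply: sqrt_ln_density_le hxi0 n_gt0 _; near: n; exact: p_ge.
have := Gnp_prob_not_good_le p_ge0 p_le1 (ltW hxi1) n_gt0 dense.
have := Gnp_probC (p n) (@good_event R n (p n) xi).
have := Gnp_prob_ge0 p_ge0 p_le1 (fun G : {set {set 'I_n}} => ~~ good_event (p n) xi G).
have := invn_le_harmonic R n_gt0.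
by move=> *; apply/andP; split; lra.
Unshelve. all: end_near.
Qed.
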